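(* Consider the distributed detection model in the context with $N\ge 2$, and let $m=\frac{N}{2N-2}$. Suppose the fusion center uses the majority rule $K^*=\lceil\frac{N+1}{2}\rceil$ and that $\alpha<\min\{0.5-P_f,\;1-m/P_d\}$. Then for any fixed $P_{1,0}\in[0,1]$, the error probability $P_E$ is a quasi-convex function of $P_{0,1}\in[0,1]$.
   Context: Binary hypothesis test between $H_0$ and $H_1$ with priors $P_0,P_1\in(0,1)$, $P_0+P_1=1$. There are $N$ sensors; conditionally on the hypothesis, their local decisions $v_i\in\{0,1\}$ are i.i.d. with $P(v_i=1\mid H_1)=P_d$, $P(v_i=1\mid H_0)=P_f$, where $0<P_f<P_d<1$. Each sensor independently is Byzantine with probability $\alpha\in[0,1]$. Honest nodes send $u_i=v_i$; a Byzantine node sends $u_i=1$ with probability $P_{1,0}$ when $v_i=0$ and sends $u_i=0$ with probability $P_{0,1}$ when $v_i=1$. Hence conditionally on $H_j$ the $u_i$ are i.i.d. with $P(u_i=1\mid H_0)=\pi_{1,0}=\alpha(P_{1,0}(1-P_f)+(1-P_{0,1})P_f)+(1-\alpha)P_f$ and $P(u_i=1\mid H_1)=\pi_{1,1}=\alpha(P_{1,0}(1-P_d)+(1-P_{0,1})P_d)+(1-\alpha)P_d$. A $K$-out-of-$N$ fusion rule decides $H_1$ iff at least $K$ of the $u_i$ equal $1$; its global false alarm and detection probabilities are $Q_F=\sum_{i=K}^N\binom{N}{i}\pi_{1,0}^i(1-\pi_{1,0})^{N-i}$ and $Q_D=\sum_{i=K}^N\binom{N}{i}\pi_{1,1}^i(1-\pi_{1,1})^{N-i}$,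 and its error probability is $P_E=P_0Q_F+P_1(1-Q_D)$. A function $f$ on an interval is called quasi-convex if there is a point $x^*$ such that $f$ is non-increasing for $x\le x^*$ and non-decreasing for $x\ge x^*$ (this includes $f$ monotone on the whole interval). *)

From HB Require Import structures.
From mathcomp Require Import all_boot all_order all_algebra.
From mathcomp Require Import reals.
Set Implicit Arguments. Unset Strict Implicit. Unset Printing Implicit Defensive.
Import Order.TTheory GRing.Theory Num.Theory.
Local Open Scope ring_scope.

Section Defs.
Variable R : realType.

(* P(u_i = 1 | H_0) *)
Definition pi10 (alpha P10 P01 Pf : R) : R :=
  alpha * (P10 * (1 - Pf) + (1 - P01) * Pf) + (1 - alpha) * Pf.

(* P(u_i = 1 | H_1) *)
Definition pi11 (alpha P10 P01 Pd : R) : R :=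
  alpha * (P10 * (1 - Pd) + (1 - P01) * Pd) + (1 - alpha) * Pd.

Definition binom_tail (N K : nat) (p : R) : R :=
  \sum_(K <= i < N.+1) ('C(N, i))%:R * p ^+ i * (1 - p) ^+ (N - i).

Definition QF (N K : nat) (alpha P10 P01 Pf : R) : R :=
  binom_tail N K (pi10 alpha P10 P01 Pf).

Definition QD (N K : nat) (alpha P10 P01 Pd : R) : R :=
  binom_tail N K (pi11 alpha P10 P01 Pd).

Definition PE (N K : nat) (P0 P1 alpha P10 P01 Pf Pd : R) : R :=
  P0 * QF N K alpha P10 P01 Pf + P1 * (1 - QD N K alpha P10 P01 Pd).

Definition quasi_convex_on (a b : R) (f : R -> R) : Prop :=
  exists xs : R,
    (forall x y, a <= x -> x <= y -> y <= xs -> y <= b -> f y <= f x) /\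
    (forall x y, xs <= x -> a <= x -> x <= y -> y <= b -> f x <= f y).
End Defs.

(* Majority rule K* = ceil((N+1)/2) = floor((N+2)/2). *)
Definition Kstar (N : nat) : nat := (N.+2)./2.

From HB Require Import structures.
From mathcomp Require Import all_boot all_order all_algebra.
From mathcomp Require Import reals.
From mathcomp Require Import polyrcf zify ring lra.
Set Implicit Arguments. Unset Strict Implicit. Unset Printing Implicit Defensive.
Import Order.TTheory GRing.Theory Num.Theory.
Local Open Scope ring_scope.

(* As a function of t = P_{0,1}, both pi10 and pi11 decrease linearly, and
   dP_E/dt = c (P1 alpha Pd g(pi11) - P0 alpha Pf g(pi10)) with
   g(p) = p^(K-1) (1-p)^(N-K), a unimodal function peaking at (K-1)/(N-1),
   which is about 1/2 for the majority rule.  The hypothesis on alpha keeps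
   pi10 below 1/2 and pi11 above m, i.e. on opposite sides of the mode, so as
   t grows g(pi10) decreases and g(pi11) increases.  Hence dP_E/dt is
   nondecreasing: P_E is convex, a fortiori quasi-convex. *)

Section QuasiConvexPoly.
Variable R : realType.
Implicit Types (q : {poly R}) (a b x y : R).

Lemma poly_le_of_deriv_le0 q x y : x <= y ->
  (forall c, x < c -> c < y -> q^`().[c] <= 0) -> q.[y] <= q.[x].
Proof.
rewrite le_eqVlt => /predU1P [->|xy] q'_le0 //.
have [c cxy mvt] := poly_mvt q xy.
rewrite -subr_le0 mvt mulr_le0_ge0 ?subr_ge0 ?(ltW xy) //.
by apply: q'_le0; rewrite (itvP cxy).
Qed.

Lemma poly_le_of_deriv_ge0 q x y : x <= y ->
  (forall c, x < c -> c < y -> 0 <= q^`().[c]) -> q.[x] <= q.[y].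
Proof.
rewrite le_eqVlt => /predU1P [->|xy] q'_ge0 //.
have [c cxy mvt] := poly_mvt q xy.
rewrite -subr_ge0 mvt mulr_ge0 ?subr_ge0 ?(ltW xy) //.
by apply: q'_ge0; rewrite (itvP cxy).
Qed.

Lemma deriv_sign_change q a b : a <= b ->
  (forall s t, a <= s -> s <= t -> t <= b -> q^`().[s] <= q^`().[t]) ->
  exists2 xs, a <= xs <= b &
    (forall c, a <= c -> c < xs -> q^`().[c] <= 0) /\
    (forall c, xs < c -> c <= b -> 0 <= q^`().[c]).
Proof.
move=> ab q'_homo.
have [q'b_le0|q'b_gt0] := lerP q^`().[b] 0.
  exists b; first by rewrite ab lexx.
  split=> [c ac cb|c bc cb]; last by have := lt_le_trans bc cb; rewrite ltxx.
  by apply: le_trans q'b_le0; apply: q'_homo => //; apply: ltW.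
have [q'a_ge0|q'a_lt0] := lerP 0 q^`().[a].
  exists a; first by rewrite ab lexx.
  split=> [c ac ca|c ac cb]; first by have := le_lt_trans ac ca; rewrite ltxx.
  by apply: le_trans q'a_ge0 _; apply: q'_homo => //; apply: ltW.
have [r /andP[ar rb] /eqP q'r0] :=
  poly_ivt ab (introT andP (conj (ltW q'a_lt0) (ltW q'b_gt0))).
exists r; first by rewrite ar rb.
by split=> c c1 c2; rewrite -q'r0; apply: q'_homo => //; apply: ltW.
Qed.

Lemma quasi_convex_on_poly q a b : a <= b ->
  (forall s t, a <= s -> s <= t -> t <= b -> q^`().[s] <= q^`().[t]) ->
  quasi_convex_on a b (horner q).
Proof.
move=> ab /(@deriv_sign_change q _ _ ab) [xs _ [q'_le0 q'_ge0]].
exists xs; split=> x y.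
  move=> ax xy yxs yb; apply: poly_le_of_deriv_le0 => // c xc cy.
  by apply: q'_le0; [apply: le_trans ax (ltW xc) | apply: lt_le_trans cy yxs].
move=> xsx ax xy yb; apply: poly_le_of_deriv_ge0 => // c xc cy.
by apply: q'_ge0; [apply: le_lt_trans xsx xc | apply: le_trans (ltW cy) yb].
Qed.

Lemma quasi_convex_on_ext a b (f g : R -> R) :
  f =1 g -> quasi_convex_on a b f -> quasi_convex_on a b g.
Proof.
by move=> fg [xs [f_dec f_inc]]; exists xs; split=> *; rewrite -!fg;
  [apply: f_dec | apply: f_inc].
Qed.

End QuasiConvexPoly.

Section BinomialTail.
Variable R : realType.

Definition beta_poly (a b : nat) : {poly R} := 'X^a * (1 - 'X) ^+ b.

Lemma horner_beta_poly a b (p : R) :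
  (beta_poly a b).[p] = p ^+ a * (1 - p) ^+ b.
Proof. by rewrite /beta_poly !hornerE. Qed.

Lemma deriv_beta_poly a b (p : R) : (beta_poly a.+1 b.+1)^`().[p] =
  p ^+ a * (1 - p) ^+ b * (a.+1%:R * (1 - p) - b.+1%:R * p).
Proof.
rewrite /beta_poly derivM derivXn deriv_exp derivB -polyC1 derivC derivX /=.
by rewrite !(hornerMn, hornerE) /= [p ^+ a.+1]exprS [(1 - p) ^+ b.+1]exprS; ring.
Qed.

Lemma beta_poly_nondecr_below_mode a b (p q : R) : (0 < a)%N -> (0 < b)%N ->
  0 <= p -> p <= q -> (a + b)%:R * q <= a%:R ->
  (beta_poly a b).[p] <= (beta_poly a b).[q].
Proof.
case: a b => [|a] [|b] // _ _ p0 pq; rewrite natrD => q_le_mode.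
apply: poly_le_of_deriv_ge0 => // c pc cq; rewrite deriv_beta_poly.
have a_gt0 : 0 < a.+1%:R :> R by rewrite ltr0n.
have b_gt0 : 0 < b.+1%:R :> R by rewrite ltr0n.
have c_le_mode : (a.+1%:R + b.+1%:R) * c <= a.+1%:R by nra.
by rewrite !mulr_ge0 ?exprn_ge0; nra.
Qed.

Lemma beta_poly_nonincr_above_mode a b (p q : R) : (0 < a)%N -> (0 < b)%N ->
  p <= q -> q <= 1 -> a%:R <= (a + b)%:R * p ->
  (beta_poly a b).[q] <= (beta_poly a b).[p].
Proof.
case: a b => [|a] [|b] // _ _ pq q1; rewrite natrD => p_ge_mode.
apply: poly_le_of_deriv_le0 => // c pc cq; rewrite deriv_beta_poly.
have a_gt0 : 0 < a.+1%:R :> R by rewrite ltr0n.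
have b_gt0 : 0 < b.+1%:R :> R by rewrite ltr0n.
have c_ge_mode : a.+1%:R <= (a.+1%:R + b.+1%:R) * c by nra.
by rewrite mulr_ge0_le0 ?mulr_ge0 ?exprn_ge0; nra.
Qed.

Definition binom_tail_poly (N K : nat) : {poly R} :=
  \sum_(K <= i < N.+1) 'C(N, i)%:R *: beta_poly i (N - i).

Lemma horner_binom_tail_poly N K (p : R) :
  (binom_tail_poly N K).[p] = binom_tail N K p.
Proof.
rewrite /binom_tail_poly horner_sum; apply: eq_bigr => i _.
by rewrite hornerZ horner_beta_poly mulrA.
Qed.

(* The derivative of the i-th term is u i - u i.+1, where
   u i = N 'C(N-1, i-1) p^(i-1) (1-p)^(N-i); the sum telescopes and
   u N.+1 = 0. *)
Lemma deriv_binom_tail_poly N K (p : R) : (1 <= K)%N -> (K <= N)%N ->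
  (binom_tail_poly N K)^`().[p] =
  (N * 'C(N.-1, K.-1))%:R * (beta_poly K.-1 (N - K)).[p].
Proof.
move=> K_gt0 KN.
pose u i : R := (N * 'C(N.-1, i.-1))%:R * (p ^+ i.-1 * (1 - p) ^+ (N - i)).
rewrite /binom_tail_poly raddf_sum horner_sum horner_beta_poly.
transitivity (\sum_(K <= i < N.+1) (u i - u i.+1)).
  apply: eq_big_nat => -[|i] /andP[Ki _]; first by have := leq_trans K_gt0 Ki.
  rewrite /= derivZ /beta_poly derivM derivXn deriv_exp derivB -polyC1 derivC.
  rewrite derivX !(hornerMn, hornerE) /= -subnS /u /=.
  by rewrite mul_bin_diag mul_bin_down !natrM; ring.
rewrite (eq_bigr (fun i => - (u i.+1 - u i))) => [|i _]; last by rewrite opprB.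
rewrite sumrN telescope_sumr ?leqW // /u bin_small /=; last first.
  by rewrite ltn_predL (leq_trans K_gt0 KN).
by rewrite muln0 mul0r opprB subr0.
Qed.

End BinomialTail.

Section ErrorProbability.
Variable R : realType.
Implicit Types (alpha t q Pf Pd : R).

Lemma pi11_pi10 alpha P10 t q : pi11 alpha P10 t q = pi10 alpha P10 t q.
Proof. by []. Qed.

Lemma pi10_affine alpha P10 t q :
  pi10 alpha P10 t q = pi10 alpha P10 0 q - alpha * q * t.
Proof. by rewrite /pi10; ring. Qed.

Lemma pi10_bounds alpha (P10 : R) t q :
  0 <= alpha <= 1 -> 0 <= P10 <= 1 -> 0 <= t <= 1 -> 0 <= q <= 1 ->
  (1 - alpha) * q <= pi10 alpha P10 t q <= alpha + (1 - alpha) * q.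
Proof.
move=> /andP[al0 al1] /andP[P10_0 P10_1] /andP[t0 t1] /andP[q0 q1].
have X_ge0 : 0 <= P10 * (1 - q) + (1 - t) * q.
  by rewrite addr_ge0 ?mulr_ge0 ?subr_ge0.
have X_le1 : P10 * (1 - q) + (1 - t) * q <= 1 by nra.
have := mulr_ge0 al0 X_ge0; have := ler_piMr al0 X_le1.
by rewrite /pi10; lra.
Qed.

Lemma pi10_in01 alpha (P10 : R) t q :
  0 <= alpha <= 1 -> 0 <= P10 <= 1 -> 0 <= t <= 1 -> 0 <= q <= 1 ->
  0 <= pi10 alpha P10 t q <= 1.
Proof.
move=> al01 P01 t01 q01; have /andP[pi_ge pi_le] := pi10_bounds al01 P01 t01 q01.
case/andP: al01 => al0 al1; case/andP: q01 => q0 q1.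
by rewrite (le_trans _ pi_ge) ?mulr_ge0 ?subr_ge0 //= (le_trans pi_le) //; nra.
Qed.

Definition PE_poly N K P0 P1 alpha P10 Pf Pd : {poly R} :=
  P0 *: (binom_tail_poly R N K \Po
          ((pi10 alpha P10 0 Pf)%:P - (alpha * Pf) *: 'X)) +
  P1 *: (1 - binom_tail_poly R N K \Po
          ((pi11 alpha P10 0 Pd)%:P - (alpha * Pd) *: 'X)).

Lemma horner_PE_poly N K P0 P1 alpha P10 Pf Pd t :
  (PE_poly N K P0 P1 alpha P10 Pf Pd).[t] = PE N K P0 P1 alpha P10 t Pf Pd.
Proof.
rewrite /PE_poly /PE /QF /QD -!horner_binom_tail_poly !pi11_pi10.
by rewrite (pi10_affine _ _ t Pf) (pi10_affine _ _ t Pd) !(hornerE, horner_comp).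
Qed.

Lemma deriv_PE_poly N K P0 P1 alpha P10 Pf Pd t : (1 <= K)%N -> (K <= N)%N ->
  (PE_poly N K P0 P1 alpha P10 Pf Pd)^`().[t] =
  (N * 'C(N.-1, K.-1))%:R *
    (P1 * (alpha * Pd) * (beta_poly R K.-1 (N - K)).[pi11 alpha P10 t Pd] -
     P0 * (alpha * Pf) * (beta_poly R K.-1 (N - K)).[pi10 alpha P10 t Pf]).
Proof.
move=> K_gt0 KN; rewrite !pi11_pi10 (pi10_affine _ _ t Pf) (pi10_affine _ _ t Pd).
rewrite /PE_poly !derivE -polyC1 !deriv_comp !derivE !(hornerE, horner_comp).
by rewrite !deriv_binom_tail_poly // !horner_beta_poly pi11_pi10 /=; ring.
Qed.

Lemma deriv_PE_poly_nondecreasing N K P0 P1 alpha P10 Pf Pd :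
  (0 < K.-1)%N -> (0 < N - K)%N ->
  0 <= P0 -> 0 <= P1 -> 0 <= alpha -> 0 <= Pf -> 0 <= Pd ->
  (forall t, 0 <= t <= 1 ->
     0 <= pi10 alpha P10 t Pf /\ N.-1%:R * pi10 alpha P10 t Pf <= K.-1%:R) ->
  (forall t, 0 <= t <= 1 ->
     pi11 alpha P10 t Pd <= 1 /\ K.-1%:R <= N.-1%:R * pi11 alpha P10 t Pd) ->
  forall s t, 0 <= s -> s <= t -> t <= 1 ->
  (PE_poly N K P0 P1 alpha P10 Pf Pd)^`().[s] <=
  (PE_poly N K P0 P1 alpha P10 Pf Pd)^`().[t].
Proof.
move=> a_gt0 b_gt0 P0_ge0 P1_ge0 al0 Pf0 Pd0 pi10_below pi11_above s t s0 st t1.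
have K_gt0 : (1 <= K)%N by clear -a_gt0; lia.
have KN : (K <= N)%N by clear -b_gt0; lia.
have s01 : 0 <= s <= 1 by rewrite s0 (le_trans st t1).
have t01 : 0 <= t <= 1 by rewrite (le_trans s0 st) t1.
have eN : (K.-1 + (N - K))%N = N.-1 by clear -K_gt0 KN; lia.
have [pi10t_ge0 _] := pi10_below t t01; have [_ pi10s_below] := pi10_below s s01.
have [pi11s_le1 _] := pi11_above s s01; have [_ pi11t_above] := pi11_above t t01.
have pi10_st : pi10 alpha P10 t Pf <= pi10 alpha P10 s Pf.
  by rewrite pi10_affine [X in _ <= X]pi10_affine lerD2l lerN2 ler_wpM2l ?mulr_ge0.
have pi11_st : pi11 alpha P10 t Pd <= pi11 alpha P10 s Pd.
  by rewrite !pi11_pi10 pi10_affine [X in _ <= X]pi10_affine lerD2l lerN2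
    ler_wpM2l ?mulr_ge0.
rewrite !deriv_PE_poly // ler_wpM2l // lerB // ler_wpM2l ?mulr_ge0 //.
  by apply: beta_poly_nonincr_above_mode; rewrite ?eN.
by apply: beta_poly_nondecr_below_mode; rewrite ?eN.
Qed.

End ErrorProbability.

Section MajorityRule.

Lemma double_Kstar_pred_le N : (2 * (Kstar N).-1 <= N)%N.
Proof. by rewrite /Kstar /=; lia. Qed.

Lemma pred_le_double_Kstar_pred N : (N.-1 <= 2 * (Kstar N).-1)%N.
Proof. by rewrite /Kstar /=; lia. Qed.

Lemma Kstar_pred_gt0 N : (1 < N)%N -> (0 < (Kstar N).-1)%N.
Proof. by rewrite /Kstar /=; lia. Qed.

Lemma Kstar_lt N : (2 < N)%N -> (Kstar N < N)%N.
Proof. by rewrite /Kstar /=; lia. Qed.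

Variable R : realType.
Implicit Types (alpha t Pf Pd : R).

Lemma majority_alpha_bound_gt2 N alpha Pd : (2 <= N)%N -> 0 <= alpha -> 0 < Pd <= 1 ->
  alpha < 1 - (N%:R / (2 * N%:R - 2)) / Pd -> (2 < N)%N.
Proof.
move=> N2 al0 /andP[Pd_gt0 Pd1]; rewrite ltn_neqAle N2 andbT.
apply: contraTneq => <-; rewrite -leNgt.
rewrite (_ : 2 * 2 - 2 = 2 :> R) ?divff ?pnatr_eq0 //; last lra.
have : 1 <= 1 / Pd by rewrite ler_pdivlMr //; lra.
lra.
Qed.

Lemma majority_pi10_below_mode N alpha (P10 : R) Pf t :
  0 <= alpha <= 1 -> 0 <= P10 <= 1 -> 0 <= t <= 1 -> 0 <= Pf <= 1 ->
  alpha < 1 / 2 - Pf ->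
  N.-1%:R * pi10 alpha P10 t Pf <= (Kstar N).-1%:R.
Proof.
move=> al01 P01 t01 Pf01 alpha_lt.
have /andP[_ pi10_le] := pi10_bounds al01 P01 t01 Pf01.
have pi10_le_half : pi10 alpha P10 t Pf <= 1 / 2.
  by case/andP: al01 => al0 _; case/andP: Pf01 => Pf0 _; nra.
have := ler_wpM2l (ler0n R N.-1) pi10_le_half.
by have := pred_le_double_Kstar_pred N; rewrite -(ler_nat R) natrM; lra.
Qed.

(* pi11 >= (1 - alpha) Pd > m and (N - 1) m = N / 2 >= (Kstar N).-1. *)
Lemma majority_pi11_above_mode N alpha (P10 : R) Pd t : (2 <= N)%N ->
  0 <= alpha <= 1 -> 0 <= P10 <= 1 -> 0 <= t <= 1 -> 0 < Pd <= 1 ->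
  alpha < 1 - (N%:R / (2 * N%:R - 2)) / Pd ->
  (Kstar N).-1%:R <= N.-1%:R * pi11 alpha P10 t Pd.
Proof.
move=> N2 al01 P01 t01 /andP[Pd_gt0 Pd1] alpha_lt.
have /andP[pi11_ge _] := pi10_bounds al01 P01 t01 (introT andP (conj (ltW Pd_gt0) Pd1)).
rewrite pi11_pi10; set m := N%:R / (2 * N%:R - 2) : R.
have eN : N.-1%:R = N%:R - 1 :> R by rewrite -subn1 natrB // (leq_trans _ N2).
have n2 : 2 <= N%:R :> R by rewrite (ler_nat R 2 N).
have m_lt : m < (1 - alpha) * Pd by rewrite -ltr_pdivrMr // /m; lra.
have mN : (N%:R - 1) * m = N%:R / 2 by rewrite /m; field; lra.
have := ler_wpM2l (ler0n R N.-1) (le_trans (ltW m_lt) pi11_ge).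
by have := double_Kstar_pred_le N; rewrite -(ler_nat R) natrM eN; lra.
Qed.

End MajorityRule.

Theorem lemma3 (R : realType) (N : nat) (P0 P1 Pf Pd alpha P10 : R) :
  (2 <= N)%N ->
  0 < P0 < 1 -> 0 < P1 < 1 -> P0 + P1 = 1 ->
  0 < Pf -> Pf < Pd -> Pd < 1 ->
  0 <= alpha <= 1 ->
  0 <= P10 <= 1 ->
  alpha < Num.min (1 / 2 - Pf)
                  (1 - (N%:R / (2 * N%:R - 2)) / Pd) ->
  quasi_convex_on 0 1
    (fun P01 => PE N (Kstar N) P0 P1 alpha P10 P01 Pf Pd).
Proof.
move=> N2 /andP[P0_gt0 _] /andP[P1_gt0 _] _ Pf_gt0 Pf_lt_Pd Pd_lt1 al01 P10_01.
rewrite lt_min => /andP[alpha_lt_f alpha_lt_d].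
have [al0 _] := andP al01.
have Pf01 : 0 <= Pf <= 1 by apply/andP; split; lra.
have Pd01 : 0 < Pd <= 1 by apply/andP; split; lra.
have N3 := majority_alpha_bound_gt2 N2 al0 Pd01 alpha_lt_d.
apply: (quasi_convex_on_ext (horner_PE_poly N (Kstar N) P0 P1 alpha P10 Pf Pd)).
apply: quasi_convex_on_poly; first exact: ler01.
apply: deriv_PE_poly_nondecreasing; rewrite ?Kstar_pred_gt0 ?subn_gt0 ?Kstar_lt //;
  try lra.
- move=> t t01; split; last exact: majority_pi10_below_mode.
  by case/andP: (pi10_in01 al01 P10_01 t01 Pf01).
move=> t t01; split; last exact: majority_pi11_above_mode.
have Pd01' : 0 <= Pd <= 1 by apply/andP; split; lra.
by case/andP: (pi10_in01 al01 P10_01 t01 Pd01').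
Qed.
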